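(* Let $G=(V,E)$ be a finite, simple, connected graph on $n=n(G)$ vertices with minimum degree $\delta$ and maximum degree $\Delta\ge 2$. Then \[ Z(G)=F_1(G)\le \frac{(\Delta-2)\,n-(\Delta-\delta)+2}{\Delta-1}. \]
   Context: All graphs are finite, simple and undirected. A set $S\subseteq V$ is a zero forcing set ($1$-forcing set) of $G$ if the following process colors every vertex: initially the vertices of $S$ are colored and all others uncolored; repeatedly, whenever a colored vertex has exactly one uncolored neighbor (at most one uncolored neighbor), that neighbor becomes colored. The zero forcing number $Z(G)=F_1(G)$ is the minimum cardinality of a zero forcing set of $G$. *)

From mathcomp Require Import all_boot all_order all_algebra.
Set Implicit Arguments. Unset Strict Implicit. Unset Printing Implicit Defensive.

Definition simple_graph (T : finType) (e : rel T) : Prop :=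
  symmetric e /\ irreflexive e.

Definition nbhd (T : finType) (e : rel T) (v : T) : {set T} := [set w | e v w].
Definition deg (T : finType) (e : rel T) (v : T) : nat := #|nbhd e v|.

Definition connected (T : finType) (e : rel T) : Prop :=
  forall x y : T, connect e x y.

(* One (parallel) round of the zero forcing color change rule: a colored
   vertex v with exactly one uncolored neighbor w forces w. *)
Definition force_step (T : finType) (e : rel T) (C : {set T}) : {set T} :=
  C :|: [set w | [exists v, (v \in C) && (nbhd e v :\: C == [set w])]].

(* Final colored set (the process stabilises after at most #|T| rounds). *)
Definition force_closure (T : finType) (e : rel T) (S : {set T}) : {set T} :=
  iter #|T| (force_step e) S.

Definition zero_forcing_set (T : finType) (e : rel T) (S : {set T}) : bool :=
  force_closure e S == setT.

(* Zero forcing number: minimum cardinality of a zero forcing set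
   (setT is always one, so #|T| is a valid default). *)
Definition Z (T : finType) (e : rel T) : nat :=
  \big[minn/#|T|]_(S : {set T} | zero_forcing_set e S) #|S|.

Definition maxdeg (T : finType) (e : rel T) : nat := \max_(v : T) deg e v.
Definition mindeg (T : finType) (e : rel T) : nat :=
  \big[minn/maxdeg e]_(v : T) deg e v.

From mathcomp Require Import all_boot all_order all_algebra.
From mathcomp Require Import zify.
Import Order.TTheory.

Set Implicit Arguments.
Unset Strict Implicit.
Unset Printing Implicit Defensive.

(* Grow a set C of vertices that the initial set S is known to color.  Start
   from the closed neighbourhood of a vertex of minimum degree δ, with one
   neighbour u removed from S.  At each step pick an edge wu leaving C, add
   the outside neighbours of w to C and all of them but u to S: then w forces
   u.  Since w already has a neighbour in C, at most Δ - 1 vertices join C,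
   while C \ S grows by exactly one, which preserves
     |C| + Δ <= (Δ - 1) |C \ S| + δ + 2.
   Once C is the whole vertex set this is the claimed bound on |S|. *)

Section Graph.
Variables (T : finType) (e : rel T).

Lemma subset_force_step (C : {set T}) : C \subset force_step e C.
Proof. exact: subsetUl. Qed.

Lemma force_step_mono : {homo force_step e : C D / C \subset D}.
Proof.
move=> C D CD; apply/subsetP => x; rewrite !inE.
case/orP=> [xC | /existsP[v /andP[vC /eqP NvC]]]; first by rewrite (subsetP CD).
case xD: (x \in D) => //=; apply/existsP; exists v; rewrite (subsetP CD) //=.
apply/eqP/setP => y; move/setP/(_ y): NvC; rewrite !inE.
have [-> | _] := eqVneq y x; first by rewrite xD => /andP[_ ->].
by apply: contraFF => /andP[yD ->]; rewrite andbT; apply: contraNN yD; apply: subsetP.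
Qed.

Definition force_closed (Q : {set T}) : Prop :=
  forall v w, v \in Q -> nbhd e v :\: Q = [set w] -> w \in Q.

(* Every force-closed superset of S contains C, i.e. starting from S all of C
   gets colored. *)
Definition forces (S C : {set T}) : Prop :=
  forall Q : {set T}, S \subset Q -> force_closed Q -> C \subset Q.

Lemma forces_refl (S : {set T}) : forces S S.
Proof. by move=> Q. Qed.

(* The least fixpoint of [X |-> S ∪ force_step X] is force-closed and contains
   S, and is reached within #|T| iterations, hence below [force_closure e S]. *)
Lemma forces_setT_zero_forcing (S : {set T}) :
  forces S setT -> zero_forcing_set e S.
Proof.
move=> fS; pose F X := S :|: force_step e X.
have Fmono : {homo F : X Y / X \subset Y}.
  by move=> X Y XY; apply/setUS/force_step_mono.
have fixT : fixset F = setT.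
  apply/eqP; rewrite -subTset; apply: fS; first by rewrite -(fixsetK Fmono) subsetUl.
  move=> v w vQ NvQ; rewrite -(fixsetK Fmono) !inE.
  by apply/orP; right; apply/orP; right; apply/existsP; exists v; rewrite vQ NvQ eqxx.
have S_iter k : S \subset iter k (force_step e) S.
  by elim: k => //= k IH; apply: subset_trans IH (subset_force_step _).
have F_iter k : iter k F set0 \subset iter k (force_step e) S.
  elim: k => [|k IH] /=; first exact: sub0set.
  rewrite subUset force_step_mono // andbT.
  exact: subset_trans (S_iter k) (subset_force_step _).
by rewrite /zero_forcing_set eqEsubset subsetT -fixT F_iter.
Qed.

Lemma Z_le_card (S : {set T}) : zero_forcing_set e S -> (Z e <= #|S|)%N.
Proof.
by move=> zS; rewrite /Z -minEnat; exact: (bigmin_le_cond _ (fun S : {set T} => #|S|) zS).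
Qed.

Definition nbhd_out (C : {set T}) (w : T) : {set T} := nbhd e w :\: C.

(* Once C and all outside neighbours of w but u are colored, u is the only
   uncolored neighbour of w. *)
Lemma forces_nbhd_out (S C : {set T}) w u : forces S C -> w \in C ->
  forces (S :|: nbhd_out C w :\ u) (C :|: nbhd_out C w).
Proof.
move=> fSC wC Q SQ Qclosed.
have CQ : C \subset Q := fSC Q (subset_trans (subsetUl _ _) SQ) Qclosed.
have outQ z : z \in nbhd_out C w -> z != u -> z \in Q.
  by move=> zU zu; apply: (subsetP SQ); rewrite in_setU in_setD1 zu zU orbT.
rewrite subUset CQ; apply/subsetP => z zU.
have [zu|] := eqVneq z u; last exact: outQ; subst z.
apply/negPn/negP => uQ; apply: (negP uQ); apply: (Qclosed w); first exact: (subsetP CQ).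
apply/setP => z; rewrite !inE; have [-> {z}|zu] := eqVneq z u.
  by rewrite uQ; move: zU; rewrite !inE => /andP[_ ->].
apply/negbTE/andP => -[zQ ewz]; apply: (negP zQ); apply: outQ zu.
by rewrite !inE ewz andbT; apply: contraNN zQ; apply: subsetP.
Qed.

Lemma connect_cross (A : {set T}) x y : x \in A -> y \notin A -> connect e x y ->
  exists a b, [/\ a \in A, b \notin A & e a b].
Proof.
move=> xA yA /connectP[p]; elim: p x xA => [|z p IH] x xA /=.
  by move=> _ yx; rewrite yx xA in yA.
case/andP=> exz pz yl; have [zA | zA] := boolP (z \in A); first exact: IH zA pz yl.
by exists x, z.
Qed.

Lemma deg_le_maxdeg v : (deg e v <= maxdeg e)%N.
Proof. exact: leq_bigmax. Qed.

Lemma mindeg_attained (v0 : T) : exists v, deg e v = mindeg e.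
Proof.
rewrite /mindeg -minEnat.
have [v _ ->] := @eq_bigmin _ nat _ (maxdeg e) v0 predT (deg e) isT (fun v _ => deg_le_maxdeg v).
by exists v.
Qed.

Lemma edge_of_maxdeg_gt0 : (0 < maxdeg e)%N -> exists a b, e a b.
Proof.
move=> D0; have [a Da] : exists a, (0 < deg e a)%N.
  apply/existsP; apply: contraLR D0; rewrite negb_exists -leqNgt => /forallP D0.
  by apply/bigmax_leqP => a _; rewrite leqNgt D0.
by move: Da; rewrite card_gt0 => /set0Pn[b]; rewrite inE; exists a, b.
Qed.

Lemma card_nbhd_out_lt (C : {set T}) w x : x \in C -> e w x ->
  (#|nbhd_out C w| < maxdeg e)%N.
Proof.
move=> xC ewx; apply: leq_trans (deg_le_maxdeg w); apply: proper_card.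
by apply/properP; split; [exact: subsetDl | exists x; rewrite !inE ?xC].
Qed.

Lemma card_setU_nbhd_out (C : {set T}) w :
  #|C :|: nbhd_out C w| = (#|C| + #|nbhd_out C w|)%N.
Proof.
rewrite -cardsUI; suff -> : C :&: nbhd_out C w = set0 by rewrite cards0 addn0.
by apply/setP => z; rewrite !inE; case: (z \in C); rewrite ?andbF.
Qed.

Lemma card_free_nbhd_out (S C : {set T}) w u : S \subset C -> u \in nbhd_out C w ->
  #|(C :|: nbhd_out C w) :\: (S :|: nbhd_out C w :\ u)| = #|C :\: S|.+1.
Proof.
move=> SC uU; have uC : u \notin C by move: uU; rewrite inE => /andP[].
suff -> : (C :|: nbhd_out C w) :\: (S :|: nbhd_out C w :\ u) = u |: (C :\: S).
  by rewrite cardsU1 in_setD (negbTE uC) andbF.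
apply/setP => z; rewrite !inE; have [-> {z}|zu] := eqVneq z u.
  have uS : u \notin S by apply: contraNN uC; apply: subsetP.
  by move: uU; rewrite !inE (negbTE uC) (negbTE uS) => /andP[_ ->].
by case: (z \in C); rewrite /= ?andbT ?andbF ?orbF //; case: (e w z); rewrite ?orbT ?andbF.
Qed.
End Graph.

Section ConnectedGraph.
Variables (T : finType) (e : rel T).
Hypotheses (e_sym : symmetric e) (e_irr : irreflexive e) (e_conn : connected e).

Definition grow_inv (C S : {set T}) : Prop :=
  [/\ C != set0, S \subset C, forces e S C,
      {in C, forall w, exists2 x, x \in C & e w x}
    & (#|C| + maxdeg e <= (maxdeg e - 1) * #|C :\: S| + mindeg e + 2)%N].

Lemma grow_inv_step (C S : {set T}) : grow_inv C S -> C != setT ->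
  exists C' S', grow_inv C' S' /\ C \proper C'.
Proof.
move=> [/set0Pn[x0 x0C] SC fSC Cnbr count] CnT.
have /subsetPn[y _ yC] : ~~ (setT \subset C) by rewrite subTset.
have [w [u [wC uC ewu]]] := connect_cross x0C yC (e_conn x0 y).
have [x xC ewx] := Cnbr w wC.
have uU : u \in nbhd_out e C w by rewrite !inE uC.
exists (C :|: nbhd_out e C w), (S :|: nbhd_out e C w :\ u); split; last first.
  by apply: properUl; apply/subsetPn; exists u.
split.
- by apply/set0Pn; exists x0; rewrite inE x0C.
- exact: setUSS SC (subD1set _ _).
- exact: forces_nbhd_out.
- move=> z; rewrite in_setU => /orP[zC | zU].
    by have [t tC ezt] := Cnbr z zC; exists t; rewrite ?inE ?tC.
  by exists w; rewrite ?inE ?wC // e_sym; move: zU; rewrite !inE => /andP[].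
- rewrite card_setU_nbhd_out (card_free_nbhd_out SC uU).
  have := card_nbhd_out_lt xC ewx; lia.
Qed.

Lemma grow_inv_setT (C S : {set T}) : grow_inv C S -> exists S', grow_inv setT S'.
Proof.
have [n] := ubnP #|~: C|; elim: n C S => // n IH C S ltCn inv.
have [/eqP CT | CnT] := boolP (C == setT); first by exists S; rewrite -CT.
have [C' [S' [inv' ltCC']]] := grow_inv_step inv CnT.
apply: (IH C' S') inv'.
have : (#|~: C'| < #|~: C|)%N by apply: proper_card; rewrite properC.
by move: ltCn; lia.
Qed.

Lemma connected_nbhd_nonempty a b : e a b -> forall v, exists u, e v u.
Proof.
move=> eab v; pose y := if v == a then b else a.
have yv : y \notin [set v].
  rewrite inE /y; have [-> | va] := eqVneq v a; last by rewrite eq_sym.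
  by apply: contraTneq eab => ->; rewrite e_irr.
have [c [u [/set1P -> _ evu]]] := connect_cross (set11 v) yv (e_conn v y).
by exists u.
Qed.

Lemma grow_inv_init : (0 < maxdeg e)%N -> exists C S : {set T}, grow_inv C S.
Proof.
move=> D0; have [a [b eab]] := edge_of_maxdeg_gt0 D0.
have [v degv] := mindeg_attained e a.
have [u evu] := connected_nbhd_nonempty eab v.
have vC : v \in [set v] by rewrite set11.
have Nv : nbhd_out e [set v] v = nbhd e v.
  by apply/setP => z; rewrite !inE andb_idl // => evz; apply: contraTneq evz => ->; rewrite e_irr.
have uU : u \in nbhd_out e [set v] v by rewrite Nv inE.
exists ([set v] :|: nbhd_out e [set v] v), ([set v] :|: nbhd_out e [set v] v :\ u).
split.
- by apply/set0Pn; exists v; rewrite inE vC.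
- exact: setUSS (subxx _) (subD1set _ _).
- by apply: forces_nbhd_out vC; apply: forces_refl.
- move=> z; rewrite Nv !inE => /orP[/eqP -> | evz]; first by exists u; rewrite ?inE ?evu ?orbT.
  by exists v; rewrite ?inE ?eqxx // e_sym.
- rewrite card_setU_nbhd_out (card_free_nbhd_out (subxx _) uU) setDv cards0 cards1 Nv.
  by rewrite -/(deg e v) degv; lia.
Qed.
End ConnectedGraph.

Local Open Scope ring_scope.

Theorem corollary1 (T : finType) (e : rel T) :
  simple_graph e -> connected e -> (2 <= maxdeg e)%N ->
  (Z e)%:Z * ((maxdeg e)%:Z - 1)
    <= ((maxdeg e)%:Z - 2) * (#|T|)%:Z - ((maxdeg e)%:Z - (mindeg e)%:Z) + 2.
Proof.
move=> [e_sym e_irr] e_conn D2.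
have [C [S inv]] := grow_inv_init e_sym e_irr e_conn (ltnW D2).
have [S' [_ _ fS' _ count]] := grow_inv_setT e_sym e_conn inv.
have ZS : (Z e * (maxdeg e - 1) <= #|S'| * (maxdeg e - 1))%N.
  by rewrite leq_mul2r Z_le_card ?orbT // forces_setT_zero_forcing.
rewrite setTD cardsT in count; have := cardsC S'.
by move: ZS count D2; lia.
Qed.
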